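(* Let $n\ge4$ and $\mathcal{A}\in\mathcal{S}_n$. Then $\operatorname{Ann}\mathcal{A}=\langle e_n\rangle$, and the automorphisms of $\mathcal{A}$ are exactly the linear maps $e_1\mapsto e_1+xe_n$, $e_i\mapsto e_i$ ($2\le i\le n$), with $x\in\mathbb{C}$.
   Context: Over $\mathbb{C}$, basis $e_1,\dots,e_n$, $e_ie_j=\sum_kc_{ij}^ke_k$. Condition ( * ): $c_{ij}^k=0$ whenever $k\le\max\{i,j\}$. For $n\ge4$, $\mathcal{S}_n$ is the family of commutative structures satisfying ( * ) with $e_i^2=e_{i+1}$ ($1\le i\le n-1$), $c_{23}^4=1$, $c_{12}^4\ne0$, $c_{1i}^{i+1}=0$ ($2\le i\le n-1$), other constants arbitrary subject to ( * ) and commutativity. $\operatorname{Ann}\mathcal{A}=\{a:a\mathcal{A}+\mathcal{A}a=0\}$. *)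

From HB Require Import structures.
From mathcomp Require Import all_boot all_order all_algebra.
From mathcomp Require Import complex.
From mathcomp Require Import Rstruct.
Set Implicit Arguments. Unset Strict Implicit. Unset Printing Implicit Defensive.
Import Order.TTheory GRing.Theory Num.Theory.
Local Open Scope ring_scope.

Definition C : fieldType := (Rdefinitions.R)[i].

(* Structure constants, indexed 1-based as in the paper:
   e_i e_j = \sum_k c i j k e_k  (only 1 <= i,j,k <= n matter). *)
Definition structc := nat -> nat -> nat -> C.

(* Elements of the n-dimensional algebra: coordinate row vectors;
   coordinate number k : 'I_n is the coefficient of e_(k+1). *)
Definition basis_vec (n i : nat) : 'rV[C]_n :=
  \row_(k < n) (if (k : nat) == i.-1 then 1 else 0).

Definition amul (n : nat) (c : structc) (u v : 'rV[C]_n) : 'rV[C]_n :=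
  \row_(k < n) \sum_(i < n) \sum_(j < n) u 0 i * v 0 j * c i.+1 j.+1 k.+1.

Definition in_Ann (n : nat) (c : structc) (a : 'rV[C]_n) : Prop :=
  forall b : 'rV[C]_n, amul c a b = 0 /\ amul c b a = 0.

(* Automorphism: invertible linear map u |-> u *m M preserving the product
   (row i of M is the image of e_(i+1)). *)
Definition is_aut (n : nat) (c : structc) (M : 'M[C]_n) : Prop :=
  M \in unitmx /\ forall u v : 'rV[C]_n, amul c (u *m M) (v *m M) = amul c u v *m M.

Definition in_Sn (n : nat) (c : structc) : Prop :=
  (forall i j k : nat, (1 <= i <= n)%N -> (1 <= j <= n)%N -> (1 <= k <= n)%N -> c i j k = c j i k) /\
  (* condition (star): c_ij^k = 0 whenever k <= max i j *)
  (forall i j k : nat, (1 <= i <= n)%N -> (1 <= j <= n)%N -> (1 <= k <= n)%N ->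
     (k <= maxn i j)%N -> c i j k = 0) /\
  (forall i k : nat, (1 <= i <= n.-1)%N -> (1 <= k <= n)%N ->
     c i i k = (if k == i.+1 then 1 else 0)) /\
  c 2 3 4 = 1 /\
  c 1 2 4 != 0 /\
  (forall i : nat, (2 <= i <= n.-1)%N -> c 1 i i.+1 = 0).

From HB Require Import structures.
From mathcomp Require Import all_boot all_order all_algebra.
From mathcomp Require Import complex.
From mathcomp Require Import Rstruct.
From mathcomp Require Import ring zify.
Import GRing.Theory.
Local Open Scope ring_scope.

(* Everything rests on one consequence of condition (star): if the
   coordinates of v below l vanish, then u v has no coordinate at or below l,
   and its coordinate l+1 is sum_p u_p v_l c_(p+1,l+1)^(l+2), whose term
   p = l equals u_l v_l because e_(l+1)^2 = e_(l+2).

   Annihilator: testing a against e_(l+1) gives a_l = 0 inductively for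
   every l < n-1; conversely e_n annihilates everything by (star).

   Automorphisms: write r_i = e_(i+1) M for the rows of the matrix M.  From
   r_(i+1) = r_i^2, M is upper triangular with M_(i+1,i+1) = M_ii^2, and
   invertibility gives a := M_00 <> 0.  Comparing r_0 r_i with (e_1 e_(i+1)) M
   and using c_(1,i+1)^(i+2) = 0 gives r_0 = a e_1 + x e_n, hence
   r_i = a^(2^i) e_(i+1) for i >= 1.  The products e_2 e_3 and e_1 e_2 then
   give a^6 = a^8 and a^3 = a^8, so a = 1.  Conversely u |-> u + x u_1 e_n is
   invertible and multiplicative, since e_n annihilates the algebra and
   every product has zero first coordinate. *)

Lemma eq1_of_pow_6_8_3 (R : idomainType) (a : R) :
  a != 0 -> a ^+ 6 = a ^+ 8 -> a ^+ 3 = a ^+ 8 -> a = 1.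
Proof.
move=> a0 e68 e38.
have a2 : a ^+ 2 = 1.
  apply: (mulfI (expf_neq0 6 a0)); by rewrite mulr1 -exprD.
have a3 : a ^+ 3 = 1 by rewrite e38 (_ : 8 = 2 * 4)%N // exprM a2 expr1n.
by rewrite -a3 exprS a2 mulr1.
Qed.

Section FamilySn.

Variables (n : nat) (c : structc).

Lemma amulDl (u1 u2 v : 'rV[C]_n) : amul c (u1 + u2) v = amul c u1 v + amul c u2 v.
Proof.
apply/rowP => k; rewrite !mxE -big_split /=; apply: eq_bigr => i _.
rewrite -big_split /=; apply: eq_bigr => j _; rewrite !mxE; ring.
Qed.

Lemma amulDr (u v1 v2 : 'rV[C]_n) : amul c u (v1 + v2) = amul c u v1 + amul c u v2.
Proof.
apply/rowP => k; rewrite !mxE -big_split /=; apply: eq_bigr => i _.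
rewrite -big_split /=; apply: eq_bigr => j _; rewrite !mxE; ring.
Qed.

Lemma amulZl s (u v : 'rV[C]_n) : amul c (s *: u) v = s *: amul c u v.
Proof.
apply/rowP => k; rewrite !mxE mulr_sumr; apply: eq_bigr => i _.
rewrite mulr_sumr; apply: eq_bigr => j _; rewrite !mxE; ring.
Qed.

Lemma amulZr s (u v : 'rV[C]_n) : amul c u (s *: v) = s *: amul c u v.
Proof.
apply/rowP => k; rewrite !mxE mulr_sumr; apply: eq_bigr => i _.
rewrite mulr_sumr; apply: eq_bigr => j _; rewrite !mxE; ring.
Qed.

Lemma basis_vecE i (k : 'I_n) : basis_vec n i 0 k = (k == i.-1 :> nat)%:R.
Proof. by rewrite mxE; case: eqP. Qed.

Lemma basis_vec_delta (i : 'I_n) : basis_vec n i.+1 = delta_mx 0 i.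
Proof. by apply/rowP => l; rewrite basis_vecE !mxE. Qed.

Lemma basis_rowM (M : 'M[C]_n) (i : 'I_n) : basis_vec n i.+1 *m M = row i M.
Proof. by rewrite basis_vec_delta -rowE. Qed.

Lemma sum_basis (p0 : 'I_n) (F : 'I_n -> C) :
  \sum_(p < n) basis_vec n p0.+1 0 p * F p = F p0.
Proof.
rewrite (bigD1 p0) //= big1 ?addr0; first by rewrite basis_vec_delta !mxE !eqxx mul1r.
by move=> p /negbTE ne_pp0; rewrite basis_vec_delta !mxE ne_pp0 mul0r.
Qed.

Lemma amul_basis (i j k : 'I_n) :
  amul c (basis_vec n i.+1) (basis_vec n j.+1) 0 k = c i.+1 j.+1 k.+1.
Proof.
rewrite mxE -(sum_basis i (fun p => c p.+1 j.+1 k.+1)).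
apply: eq_bigr => p _; rewrite -(sum_basis j (fun q => c p.+1 q.+1 k.+1)) mulr_sumr.
by apply: eq_bigr => q _; rewrite mulrA.
Qed.

Lemma mul_upper_coord (M : 'M[C]_n) (w : 'rV[C]_n) (l : 'I_n) :
  (forall q : 'I_n, (q < l)%N -> w 0 q = 0) ->
  (forall q p : 'I_n, (p < q)%N -> M q p = 0) ->
  (w *m M) 0 l = w 0 l * M l l.
Proof.
move=> w_low M_up; rewrite mxE (bigD1 l) //= big1 ?addr0 // => q ne_ql.
case: (ltngtP q l) => [lt_ql|lt_lq|eq_ql]; first by rewrite w_low ?mul0r.
  by rewrite M_up ?mulr0.
by case/eqP: ne_ql; apply: val_inj.
Qed.

Lemma mul_shear (i0 : 'I_n) (y : C) (N : 'M[C]_n) : (i0 : nat) = 0%N ->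
  (forall i : 'I_n, row i N = basis_vec n i.+1 +
     (if (i : nat) == 0%N then y *: basis_vec n n else 0)) ->
  forall u : 'rV[C]_n, u *m N = u + (y * u 0 i0) *: basis_vec n n.
Proof.
move=> i0_0 rowN u; rewrite mulmx_sum_row.
under eq_bigr do rewrite rowN scalerDr basis_vec_delta.
rewrite big_split /= -row_sum_delta; congr (_ + _).
rewrite (bigD1 i0) //= i0_0 eqxx scalerA mulrC big1 ?addr0 // => i ne_ii0.
suff /negbTE -> : (i : nat) != 0%N by rewrite scaler0.
by apply: contra ne_ii0 => /eqP i_0; apply/eqP/val_inj; rewrite /= i_0.
Qed.

Hypothesis Hc : in_Sn n c.

Lemma Sn_star (i j k : 'I_n) : (k <= maxn i j)%N -> c i.+1 j.+1 k.+1 = 0.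
Proof. by case: Hc => _ [star _] ?; apply: star; rewrite /= ?ltn_ord //; lia. Qed.

Lemma Sn_square (i k : 'I_n) : (i.+1 < n)%N ->
  c i.+1 i.+1 k.+1 = (k == i.+1 :> nat)%:R.
Proof.
case: Hc => _ [_ [sq _]] lt_in; rewrite sq ?eqSS /= ?ltn_ord //; last lia.
by case: eqP.
Qed.

Lemma Sn_c1 (i : nat) : (1 <= i)%N -> (i.+1 < n)%N -> c 1 i.+1 i.+2 = 0.
Proof. by case: Hc => _ [_ [_ [_ [_ c1]]]] ? ?; apply: c1; lia. Qed.

Lemma basis_square (i : 'I_n) : (i.+1 < n)%N ->
  amul c (basis_vec n i.+1) (basis_vec n i.+1) = basis_vec n i.+2.
Proof. by move=> ?; apply/rowP => k; rewrite amul_basis Sn_square // basis_vecE. Qed.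

Lemma amul_low_coord (u v : 'rV[C]_n) (m : nat) (k : 'I_n) :
  (forall q : 'I_n, (q < m)%N -> v 0 q = 0) -> (k <= m)%N -> amul c u v 0 k = 0.
Proof.
move=> v_low le_km; rewrite mxE big1 // => p _; rewrite big1 // => j _.
case: (ltnP j m) => [lt_jm|le_mj]; first by rewrite v_low // mulr0 mul0r.
by rewrite Sn_star ?mulr0 //; lia.
Qed.

Lemma amul_next_coord (u v : 'rV[C]_n) (l k : 'I_n) : (k : nat) = l.+1 ->
  (forall q : 'I_n, (q < l)%N -> v 0 q = 0) ->
  (forall p : 'I_n, (p < l)%N -> u 0 p * c p.+1 l.+1 k.+1 = 0) ->
  amul c u v 0 k = u 0 l * v 0 l.
Proof.
move=> k_def v_low u_low.
have only_l : forall p : 'I_n, \sum_(j < n) u 0 p * v 0 j * c p.+1 j.+1 k.+1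
                               = u 0 p * v 0 l * c p.+1 l.+1 k.+1.
  move=> p; rewrite (bigD1 l) //= big1 ?addr0 // => j ne_jl.
  case: (ltnP j l) => [lt_jl|le_lj]; first by rewrite v_low // mulr0 mul0r.
  have ne_jl' : (j : nat) != l := ne_jl.
  by rewrite Sn_star ?mulr0 //; lia.
rewrite mxE (eq_bigr _ (fun p _ => only_l p)) (bigD1 l) //= big1 ?addr0.
  by rewrite Sn_square ?k_def ?eqxx ?mulr1 // -k_def ltn_ord.
move=> p ne_pl; case: (ltnP p l) => [lt_pl|le_lp].
  by rewrite mulrAC u_low // mul0r.
have ne_pl' : (p : nat) != l := ne_pl.
by rewrite Sn_star ?mulr0 //; lia.
Qed.

Lemma en_amul (v : 'rV[C]_n) : amul c (basis_vec n n) v = 0.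
Proof.
apply/rowP => k; rewrite !mxE big1 // => i _; rewrite big1 // => j _.
rewrite basis_vecE; case: eqP => [i_n|_]; last by rewrite !mul0r.
by rewrite Sn_star ?mulr0 //; have := ltn_ord k; lia.
Qed.

Lemma amul_en (v : 'rV[C]_n) : amul c v (basis_vec n n) = 0.
Proof.
apply/rowP => k; rewrite !mxE big1 // => i _; rewrite big1 // => j _.
rewrite basis_vecE; case: eqP => [j_n|_]; last by rewrite mulr0 mul0r.
by rewrite Sn_star ?mulr0 //; have := ltn_ord k; lia.
Qed.

Lemma Ann_Sn (a : 'rV[C]_n) : in_Ann c a <-> exists x : C, a = x *: basis_vec n n.
Proof.
split=> [annA|[x ->] b]; last by rewrite amulZl amulZr en_amul amul_en !scaler0.
have a_low : forall m (l : 'I_n), (l < m)%N -> (l.+1 < n)%N -> a 0 l = 0.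
  elim=> [//|m IHm] l lt_lm lt_ln.
  case: (ltnP l m) => [lt_lm'|le_ml]; first exact: IHm lt_lm' lt_ln.
  have := congr1 (fun r : 'rV[C]_n => r 0 (Ordinal lt_ln)) (proj1 (annA (basis_vec n l.+1))).
  rewrite /= (amul_next_coord _ _ l) //.
  - by rewrite basis_vecE eqxx mulr1 mxE.
  - by move=> q lt_ql; rewrite basis_vecE /=; case: eqP => //; lia.
  - by move=> p lt_pl; rewrite IHm ?mul0r //; lia.
case: (posnP n) => [n0|n_gt0].
  by exists 0; apply/rowP => l; have := ltn_ord l; rewrite {2}n0.
have lt_n1n : (n.-1 < n)%N by lia.
exists (a 0 (Ordinal lt_n1n)); apply/rowP => l; rewrite mxE basis_vecE.
case: eqP => [l_n1|ne_l]; first by rewrite mulr1; congr (a 0 _); apply: val_inj.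
by rewrite mulr0 (a_low n) //; have := ltn_ord l; lia.
Qed.

Variable i0 : 'I_n.
Hypothesis i0_0 : (i0 : nat) = 0%N.

Lemma shear_is_aut (x : C) (M : 'M[C]_n) : (1 < n)%N ->
  (forall i : 'I_n, row i M = basis_vec n i.+1 +
     (if (i : nat) == 0%N then x *: basis_vec n n else 0)) ->
  is_aut c M.
Proof.
move=> lt_1n rowM; have en_i0 : basis_vec n n 0 i0 = 0.
  by rewrite basis_vecE i0_0; case: eqP => //; lia.
split.
  pose N : 'M[C]_n := \matrix_(i < n) (basis_vec n i.+1 +
      (if (i : nat) == 0%N then (- x) *: basis_vec n n else 0)).
  have MN : M *m N = 1%:M.
    apply/row_matrixP => i; rewrite row_mul (mul_shear _ (-x) _ i0_0) => [|j]; last by rewrite rowK.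
    rewrite rowM row1 -basis_vec_delta !mxE /= i0_0.
    case: (posnP i) => [i_0|i_gt0]; last first.
      by rewrite eq_sym (gtn_eqF i_gt0) mxE !addr0 mulr0 scale0r addr0.
    rewrite i_0 eqxx mxE en_i0 mulr0 addr0 mulr1 -addrA -scalerDl.
    by rewrite addrN scale0r addr0.
  by case: (mulmx1_unit MN).
move=> u v; rewrite !(mul_shear _ x _ i0_0 rowM).
rewrite amulDl !amulDr !amulZl !amulZr en_amul !amul_en !scaler0 !addr0.
by rewrite (amul_low_coord _ _ 0) ?i0_0 // mulr0 scale0r addr0.
Qed.

Section Automorphism.

Variable M : 'M[C]_n.
Hypothesis autM : is_aut c M.

Lemma aut_rows_amul (i j : 'I_n) :
  amul c (row i M) (row j M) = amul c (basis_vec n i.+1) (basis_vec n j.+1) *m M.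
Proof. by rewrite -!basis_rowM (proj2 autM). Qed.

(* r_(i+1) = r_i^2, the image of e_(i+1)^2 = e_(i+2). *)
Lemma aut_row_next (i j : 'I_n) : (j : nat) = i.+1 ->
  row j M = amul c (row i M) (row i M).
Proof.
move=> j_def; rewrite aut_rows_amul basis_square -?j_def ?ltn_ord //.
by rewrite -basis_rowM j_def.
Qed.

Lemma aut_upper (q l : 'I_n) : (l < q)%N -> M q l = 0.
Proof.
move: q l; suff upper m : forall q l : 'I_n, (q : nat) = m -> (l < q)%N -> M q l = 0.
  by move=> q l; exact: upper.
elim: m => [|m IHm] q l q_def lt_lq; first by rewrite q_def in lt_lq.
have lt_mn : (m < n)%N by have := ltn_ord q; lia.
have -> : M q l = row q M 0 l by rewrite mxE.
rewrite (aut_row_next (Ordinal lt_mn)) //.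
apply: (amul_low_coord _ _ m) => [p lt_pm|]; first by rewrite mxE IHm.
by move: lt_lq; rewrite q_def.
Qed.

Lemma aut_diag_next (i j : 'I_n) : (j : nat) = i.+1 -> M j j = M i i * M i i.
Proof.
move=> j_def; have -> : M j j = row j M 0 j by rewrite mxE.
rewrite (aut_row_next i) // (amul_next_coord _ _ i) ?mxE //.
  by move=> q lt_qi; rewrite mxE aut_upper.
by move=> p lt_pi; rewrite mxE aut_upper ?mul0r.
Qed.

Lemma aut_diag_pow (i : 'I_n) : M i i = M i0 i0 ^+ (2 ^ i).
Proof.
move: i; suff diag m : forall i : 'I_n, (i : nat) = m -> M i i = M i0 i0 ^+ (2 ^ m).
  by move=> i; exact: diag.
elim: m => [|m IHm] i i_def.
  by rewrite expr1; congr (M _ _); apply: val_inj; rewrite /= i_def i0_0.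
have lt_mn : (m < n)%N by have := ltn_ord i; lia.
by rewrite (aut_diag_next (Ordinal lt_mn)) // IHm // expnSr exprM expr2.
Qed.

(* Invertibility forces a := M_00 <> 0, since otherwise column 0 vanishes. *)
Lemma aut_M00_neq0 : M i0 i0 != 0.
Proof.
apply/eqP => M00; have col0 : forall q : 'I_n, M q i0 = 0.
  move=> q; case: (posnP q) => [q_0|q_gt0]; last by rewrite aut_upper ?i0_0.
  by rewrite -M00; congr (M _ _); apply: val_inj; rewrite /= q_0 i0_0.
have := congr1 (fun r : 'rV[C]_n => r 0 i0) (mulmxKV (proj1 autM) (basis_vec n 1)).
rewrite /= mxE big1 => [|q _]; last by rewrite col0 mulr0.
by rewrite basis_vecE i0_0 /= => /esym/eqP; rewrite oner_eq0.
Qed.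

Lemma aut_diag_neq0 (i : 'I_n) : M i i != 0.
Proof. by rewrite aut_diag_pow expf_neq0 // aut_M00_neq0. Qed.

(* Comparing r_0 r_l with (e_1 e_(l+1)) M at coordinate l+1, where
   c_(1,l+1)^(l+2) = 0, shows that r_0 has no coordinates strictly between
   the first and the last. *)
Lemma aut_first_row_mid (l : 'I_n) : (1 <= l)%N -> (l.+1 < n)%N -> M i0 l = 0.
Proof.
move: l; suff mid m : forall l : 'I_n, (l < m)%N -> (1 <= l)%N -> (l.+1 < n)%N -> M i0 l = 0.
  by move=> l; exact: mid.
elim: m => [//|m IHm] l lt_lm l_gt0 lt_l1n.
case: (ltnP l m) => [lt_lm'|le_ml]; first exact: IHm lt_lm' l_gt0 lt_l1n.
have := congr1 (fun r : 'rV[C]_n => r 0 (Ordinal lt_l1n)) (aut_rows_amul i0 l).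
rewrite /= (amul_next_coord _ _ l) //; first last.
- move=> p lt_pl; case: (posnP p) => [p_0|p_gt0]; last by rewrite mxE IHm ?mul0r //; lia.
  by rewrite p_0 Sn_c1 ?mulr0.
- by move=> q lt_ql; rewrite mxE aut_upper.
rewrite mul_upper_coord; first last.
- exact: aut_upper.
- by move=> q /= lt_ql; rewrite amul_basis Sn_star // i0_0; lia.
rewrite amul_basis /= i0_0 Sn_c1 // mul0r !mxE => /eqP.
by rewrite mulf_eq0 (negbTE (aut_diag_neq0 l)) orbF => /eqP.
Qed.

Lemma aut_first_row : (1 < n)%N ->
  exists x : C, row i0 M = M i0 i0 *: basis_vec n i0.+1 + x *: basis_vec n n.
Proof.
move=> lt_1n; have lt_n1n : (n.-1 < n)%N by lia.
exists (M i0 (Ordinal lt_n1n)); apply/rowP => l; rewrite !mxE /= i0_0.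
case: (posnP l) => [l_0|l_gt0].
  rewrite l_0 (_ : (0 == n.-1)%N = false); last by apply/eqP; lia.
  by rewrite mulr1 mulr0 addr0; congr (M _ _); apply: val_inj; rewrite /= l_0 i0_0.
rewrite mulr0 add0r; case: eqP => [l_n1|ne_l].
  by rewrite mulr1; congr (M _ _); apply: val_inj.
by rewrite mulr0 aut_first_row_mid //; have := ltn_ord l; lia.
Qed.

(* Squaring r_0 = a e_1 + x e_n repeatedly: r_i = a^(2^i) e_(i+1) for i >= 1. *)
Lemma aut_row_pow (i : 'I_n) : (0 < i)%N ->
  row i M = M i0 i0 ^+ (2 ^ i) *: basis_vec n i.+1.
Proof.
move: i; suff pow m : forall i : 'I_n, (i : nat) = m.+1 ->
    row i M = M i0 i0 ^+ (2 ^ m.+1) *: basis_vec n m.+2.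
  by move=> i i_gt0; rewrite (pow i.-1) ?prednK.
elim: m => [|m IHm] i i_def.
  have [|x row0] := aut_first_row; first by have := ltn_ord i; lia.
  rewrite (aut_row_next i0) ?i_def ?i0_0 // row0 amulDl !amulDr !amulZl !amulZr.
  rewrite !en_amul !amul_en !scaler0 !addr0 scalerA -expr2.
  by rewrite basis_square ?i0_0 //; have := ltn_ord i; lia.
have lt_m1n : (m.+1 < n)%N by have := ltn_ord i; lia.
rewrite (aut_row_next (Ordinal lt_m1n)) // (IHm (Ordinal lt_m1n)) // amulZl amulZr.
rewrite (basis_square (Ordinal lt_m1n)); last by rewrite /= -i_def.
by rewrite scalerA -expr2 -exprM -expnSr.
Qed.

(* The products e_2 e_3 and e_1 e_2, read at coordinate 4, give a^6 = a^8
   and a^3 = a^8; hence a = 1. *)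
Lemma aut_M00_eq1 : (3 < n)%N -> M i0 i0 = 1.
Proof.
move=> lt_3n; have lt_1n : (1 < n)%N by lia.
have lt_2n : (2 < n)%N by lia.
pose i1 := Ordinal lt_1n; pose i2 := Ordinal lt_2n; pose i3 := Ordinal lt_3n.
have [c234 c124] : c 2 3 4 = 1 /\ c 1 2 4 != 0 by case: Hc => _ [_ [_ [-> [-> _]]]].
have [x row0] := aut_first_row lt_1n.
have M33 : M i3 i3 = M i0 i0 ^+ 8 by rewrite aut_diag_pow.
have e23 := aut_rows_amul i1 i2.
rewrite !aut_row_pow // amulZl amulZr scalerA in e23.
move/(congr1 (fun r : 'rV[C]_n => r 0 i3)): e23; rewrite mxE amul_basis mul_upper_coord; first last.
- exact: aut_upper.
- by move=> q lt_q3; rewrite /= in lt_q3; rewrite amul_basis Sn_star //; lia.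
rewrite amul_basis M33 /= c234 mulr1 mul1r -exprD => e23.
have e12 := aut_rows_amul i0 i1.
rewrite row0 aut_row_pow // amulDl !amulZl !amulZr en_amul !scaler0 addr0 scalerA in e12.
move/(congr1 (fun r : 'rV[C]_n => r 0 i3)): e12; rewrite mxE amul_basis mul_upper_coord; first last.
- exact: aut_upper.
- move=> q lt_q3; rewrite /= in lt_q3; rewrite amul_basis.
  case: (ltnP q 2) => [lt_q2|le_2q]; first by rewrite Sn_star //= i0_0; lia.
  by rewrite i0_0 (_ : (q : nat) = 2) ?Sn_c1 //; lia.
rewrite amul_basis M33 /= i0_0 -exprS [RHS]mulrC => /(mulIf c124) e12.
exact: eq1_of_pow_6_8_3 aut_M00_neq0 e23 e12.
Qed.

Lemma aut_shape : (3 < n)%N -> exists x : C, forall i : 'I_n,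
  row i M = basis_vec n i.+1 + (if (i : nat) == 0%N then x *: basis_vec n n else 0).
Proof.
move=> lt_3n; have [|x row0] := aut_first_row; first lia.
exists x => i; case: (posnP i) => [i_0|i_gt0].
  have -> : i = i0 by apply: val_inj; rewrite /= i_0 i0_0.
  by rewrite row0 aut_M00_eq1 // scale1r i0_0.
by rewrite aut_row_pow // aut_M00_eq1 // expr1n scale1r addr0.
Qed.

End Automorphism.
End FamilySn.

Theorem mainTheorem13 (n : nat) (c : structc) :
  (4 <= n)%N -> in_Sn n c ->
  (forall a : 'rV[C]_n, in_Ann c a <-> exists x : C, a = x *: basis_vec n n) /\
  (forall M : 'M[C]_n, is_aut c M <->
     exists x : C, forall i : 'I_n,
       row i M = basis_vec n i.+1 + (if (i : nat) == 0%N then x *: basis_vec n n else 0)).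
Proof.
move=> lt_3n Hc; have lt_0n : (0 < n)%N by lia.
pose i0 := Ordinal lt_0n.
split=> [a|M]; first exact: Ann_Sn.
split=> [autM|[x rowM]].
  exact: (@aut_shape n c Hc i0 erefl M autM lt_3n).
by apply: (@shear_is_aut n c Hc i0 erefl x M) => //; lia.
Qed.
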